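(* Let $c\ge 0$, $b>0$, $q(x)=c/x^2$, and consider the eigenvalue problem $$-u''+q(x)u=\lambda u,\quad x\in(0,b),\qquad u(0)=u(b)=0 .$$ Let $\lambda_j$ be its eigenvalues and $u_j$ corresponding eigenfunctions normalized by $\int_0^b u_j^2\,dx=1$, and set $J_j(b)=u_j'(b)^2/\lambda_j$. Then $$J_j(b)=\frac{2}{b},\qquad j=1,2,\dots .$$ *)

From Stdlib Require Import Reals.
From Coquelicot Require Import Coquelicot.
Open Scope R_scope.

Definition q_inv_sq (c x : R) : R := c / (x ^ 2).

(* (lam, u) is a (classical) eigenpair of
     -u'' + (c/x^2) u = lam u  on (0,b),   u(0) = u(b) = 0,
   with u continuous on [0,b] (continuity at 0 from the right),
   twice differentiable on (0,b), differentiable at b (so u'(b) exists),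
   normalized by  int_0^b u^2 = 1  (which also forces u <> 0). *)
Definition dirichlet_eigenpair (c b lam : R) (u : R -> R) : Prop :=
  (forall x, 0 < x < b -> ex_derive u x /\ ex_derive (Derive u) x) /\
  (forall x, 0 < x < b ->
      - Derive_n u 2 x + q_inv_sq c x * u x = lam * u x) /\
  ex_derive u b /\
  filterlim u (at_right 0) (locally 0) /\
  u 0 = 0 /\ u b = 0 /\
  RInt (fun x => (u x) ^ 2) 0 b = 1.

Definition J_functional (lam : R) (u : R -> R) (b : R) : R :=
  (Derive u b) ^ 2 / lam.

From Stdlib Require Import Reals Lra.
From Coquelicot Require Import Coquelicot.
Open Scope R_scope.

(** Along a solution of [-u'' + (c/x^2) u = lam u] the function
    [P x = x u'^2 - u u' - c u^2/x + lam x u^2] satisfies [P' = 2 lam u^2].  Near [0] the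
    derivative [u'] stays bounded (for [c > 0] the potential [c/x^2 - lam] is nonnegative
    there, which makes [u u'] nonnegative and [u'^2] nondecreasing; for [c = 0], [u'' = -lam u]
    is bounded), so [u = O(x)] and [P(0+) = 0]; at [b], [u(b) = 0] gives [P(b-) = b u'(b)^2].
    Integrating [P'] over [(0,b)] yields [b u'(b)^2 = 2 lam].  Finally [lam <> 0]: for
    [lam = 0] the potential is nonnegative on all of [(0,b)], so [u u'] is nonnegative,
    nondecreasing and tends to [0] at [b], hence vanishes, and [u] vanishes identically. *)

Lemma mean_value (f df : R -> R) (a b : R) : a < b ->
  (forall x, a < x < b -> is_derive f x (df x)) ->
  (forall x, a <= x <= b -> continuous f x) ->
  exists c, a < c < b /\ f b - f a = df c * (b - a).
Proof.
  intros Hab Hd Hc.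
  assert (pr : forall x, a < x < b -> derivable_pt f x).
  { intros x Hx. exists (df x). apply is_derive_Reals, Hd, Hx. }
  destruct (MVT f id a b pr (fun x _ => derivable_pt_id x) Hab) as [c [Hc' E]].
  - intros x Hx. apply continuity_pt_filterlim, Hc, Hx.
  - intros x _. apply derivable_continuous_pt, derivable_pt_id.
  - exists c. split; [exact Hc'|].
    rewrite derive_pt_id, (derive_pt_eq_0 _ _ (df c)) in E
      by apply is_derive_Reals, Hd, Hc'.
    unfold id in E. lra.
Qed.

Lemma mean_value_interior (f df : R -> R) (a b x y : R) :
  (forall z, a < z < b -> is_derive f z (df z)) -> a < x -> x < y -> y < b ->
  exists c, x < c < y /\ f y - f x = df c * (y - x).
Proof.
  intros Hd Hx Hxy Hy. apply mean_value; [exact Hxy | intros z Hz; apply Hd; lra |].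
  intros z Hz. apply (ex_derive_continuous f). exists (df z). apply Hd. lra.
Qed.

Lemma nondecreasing_of_derive_nonneg (f df : R -> R) (a b : R) :
  (forall x, a < x < b -> is_derive f x (df x)) ->
  (forall x, a < x < b -> 0 <= df x) ->
  forall x y, a < x -> x <= y -> y < b -> f x <= f y.
Proof.
  intros Hd Hp x y Hx Hxy Hy.
  destruct (Req_dec x y) as [<-|Hne]; [lra|].
  destruct (mean_value_interior f df a b x y Hd) as [c [Hc E]]; try lra.
  assert (0 <= df c) by (apply Hp; lra). nra.
Qed.

Lemma lipschitz_of_derive_bounded (f df : R -> R) (a b M : R) :
  (forall x, a < x < b -> is_derive f x (df x)) ->
  (forall x, a < x < b -> Rabs (df x) <= M) ->
  forall x y, a < x -> x <= y -> y < b -> Rabs (f y - f x) <= M * (y - x).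
Proof.
  intros Hd HM x y Hx Hxy Hy.
  destruct (Req_dec x y) as [<-|Hne].
  - rewrite Rminus_diag, Rabs_R0. lra.
  - destruct (mean_value_interior f df a b x y Hd) as [c [Hc ->]]; try lra.
    rewrite Rabs_mult, (Rabs_pos_eq (y - x)) by lra.
    apply Rmult_le_compat_r; [lra | apply HM; lra].
Qed.

Lemma constant_of_derive_0 (f : R -> R) (a b : R) :
  (forall x, a < x < b -> is_derive f x 0) ->
  forall x y, a < x < b -> a < y < b -> f x = f y.
Proof.
  intros Hd.
  assert (H : forall x y, a < x -> x <= y -> y < b -> f x = f y).
  { intros x y Hx Hxy Hy.
    assert (Hxy0 : Rabs (f y - f x) <= 0 * (y - x)).
    { apply (lipschitz_of_derive_bounded f (fun _ => 0) a b 0 Hd); try lra.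
      intros; rewrite Rabs_R0; lra. }
    rewrite Rmult_0_l in Hxy0. apply Rabs_le_between in Hxy0. lra. }
  intros x y Hx Hy. destruct (Rle_or_lt x y); [apply H | symmetry; apply H]; lra.
Qed.

Lemma at_right_of_interval (a d : R) (P : R -> Prop) :
  0 < d -> (forall x, a < x < a + d -> P x) -> at_right a P.
Proof.
  intros Hd HP. exists (mkposreal d Hd). intros x Hx Hax.
  change (Rabs (x - a) < d) in Hx. apply Rabs_def2 in Hx. apply HP. lra.
Qed.

Lemma at_left_of_interval (b d : R) (P : R -> Prop) :
  0 < d -> (forall x, b - d < x < b -> P x) -> at_left b P.
Proof.
  intros Hd HP. exists (mkposreal d Hd). intros x Hx Hxb.
  change (Rabs (x - b) < d) in Hx. apply Rabs_def2 in Hx. apply HP. lra.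
Qed.

Lemma filterlim_Rplus {T} {F : (T -> Prop) -> Prop} {FF : Filter F}
  (f g : T -> R) (a b : R) :
  filterlim f F (locally a) -> filterlim g F (locally b) ->
  filterlim (fun x => f x + g x) F (locally (a + b)).
Proof.
  intros Hf Hg. eapply filterlim_comp_2; [exact Hf | exact Hg | exact (filterlim_plus a b)].
Qed.

Lemma filterlim_Rmult {T} {F : (T -> Prop) -> Prop} {FF : Filter F}
  (f g : T -> R) (a b : R) :
  filterlim f F (locally a) -> filterlim g F (locally b) ->
  filterlim (fun x => f x * g x) F (locally (a * b)).
Proof.
  intros Hf Hg. eapply filterlim_comp_2; [exact Hf | exact Hg | exact (filterlim_mult a b)].
Qed.

Lemma filterlim_eventually_const {T} {F : (T -> Prop) -> Prop} {FF : ProperFilter' F}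
  (f : T -> R) (k l : R) :
  F (fun x => k = f x) -> filterlim f F (locally l) -> l = k.
Proof.
  intros Hk Hl. apply (filterlim_locally_unique f); [exact Hl|].
  apply (filterlim_ext_loc (fun _ => k)); [exact Hk | apply filterlim_const].
Qed.

Lemma derive_0_eq_at_right_limit (f : R -> R) (a b l : R) :
  (forall x, a < x < b -> is_derive f x 0) -> filterlim f (at_right a) (locally l) ->
  forall x, a < x < b -> f x = l.
Proof.
  intros Hd Hl x Hx. symmetry.
  (* The filter instance is explicit: searching for [ProperFilter' (at_right a)] diverges. *)
  apply (filterlim_eventually_const (FF := Proper_StrongProper _ (at_right_proper_filter a))
    f (f x) l); [|exact Hl].
  apply (at_right_of_interval a (x - a)); [lra|]. intros y Hy.
  apply (constant_of_derive_0 f a b Hd); lra.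
Qed.

Lemma derive_0_eq_at_left_limit (f : R -> R) (a b l : R) :
  (forall x, a < x < b -> is_derive f x 0) -> filterlim f (at_left b) (locally l) ->
  forall x, a < x < b -> f x = l.
Proof.
  intros Hd Hl x Hx. symmetry.
  apply (filterlim_eventually_const (FF := Proper_StrongProper _ (at_left_proper_filter b))
    f (f x) l); [|exact Hl].
  apply (at_left_of_interval b (b - x)); [lra|]. intros y Hy.
  apply (constant_of_derive_0 f a b Hd); lra.
Qed.

Lemma filterlim_derive_at_left (f df : R -> R) (a b l M : R) : a < b ->
  (forall x, a < x < b -> is_derive f x (df x)) ->
  (forall x y, a < x -> x <= y -> y < b -> Rabs (df y - df x) <= M * (y - x)) ->
  is_derive f b l ->
  filterlim df (at_left b) (locally l).
Proof.
  intros Hab Hd HM Hb. apply filterlim_locally. intros eps.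
  pose proof (cond_pos eps) as Heps.
  destruct (proj1 (is_derive_Reals f b l) Hb (eps / 2)) as [delta Hdelta]; [lra|].
  pose proof (cond_pos delta) as Hdelta0.
  set (r := Rmin (Rmin (b - a) delta) (eps / (2 * (Rabs M + 1)))).
  assert (Hr : 0 < r /\ r <= b - a /\ r <= delta /\ r * (Rabs M + 1) <= eps / 2).
  { pose proof (Rabs_pos M).
    assert (Hq : eps / (2 * (Rabs M + 1)) * (Rabs M + 1) = eps / 2) by (field; lra).
    assert (0 < eps / (2 * (Rabs M + 1))) by (apply Rdiv_lt_0_compat; lra).
    unfold r. repeat split.
    - repeat apply Rmin_pos; lra.
    - eapply Rle_trans; apply Rmin_l.
    - eapply Rle_trans; [apply Rmin_l | apply Rmin_r].
    - rewrite <- Hq. apply Rmult_le_compat_r; [lra | apply Rmin_r]. }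
  apply (at_left_of_interval b r); [lra|]. intros x Hx. change (Rabs (df x - l) < eps).
  (* The difference quotient of [f] on [[x, b]] is a value [df c], which is close to [l]
     because [f'(b) = l] and close to [df x] because [df] is Lipschitz. *)
  destruct (mean_value f df x b) as [c [Hc E]]; [lra | intros; apply Hd; lra | |].
  { intros z Hz. apply (ex_derive_continuous f).
    destruct (Req_dec z b) as [->|Hzb]; [exists l; exact Hb | exists (df z); apply Hd; lra]. }
  assert (Hq : Rabs (df c - l) < eps / 2).
  { replace (df c) with ((f (b + (x - b)) - f b) / (x - b))
      by (replace (b + (x - b)) with x by ring; field_simplify_eq; lra).
    apply Hdelta; [lra|]. rewrite Rabs_left; lra. }
  assert (Hl : Rabs (df c - df x) <= Rabs M * r).
  { eapply Rle_trans; [apply (HM x c); lra|].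
    eapply Rle_trans; [apply Rmult_le_compat_r; [lra | apply Rle_abs]|].
    apply Rmult_le_compat_l; [apply Rabs_pos | lra]. }
  replace (df x - l) with ((df c - l) - (df c - df x)) by ring.
  eapply Rle_lt_trans; [apply Rabs_triang|]. rewrite Rabs_Ropp. lra.
Qed.

Lemma is_derive_Rmult (f g : R -> R) (x df dg : R) :
  is_derive f x df -> is_derive g x dg ->
  is_derive (fun t => f t * g t) x (df * g x + f x * dg).
Proof. intros Hf Hg. apply (is_derive_mult f g x df dg Hf Hg). intros; apply Rmult_comm. Qed.

Lemma is_derive_RInt_continuous (g : R -> R) (a : R) :
  (forall x, continuous g x) -> forall x, is_derive (fun y => RInt g a y) x (g x).
Proof.
  intros Hg x. apply (is_derive_RInt g _ a); [|apply Hg].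
  apply filter_forall. intros y.
  apply (@RInt_correct R_CompleteNormedModule), (@ex_RInt_continuous R_CompleteNormedModule).
  intros z _. apply Hg.
Qed.

Lemma abs_le_linear_of_derive_bounded (f df : R -> R) (d B : R) :
  filterlim f (at_right 0) (locally 0) ->
  (forall x, 0 < x < d -> is_derive f x (df x)) ->
  (forall x, 0 < x < d -> Rabs (df x) <= B) ->
  forall x, 0 < x < d -> Rabs (f x) <= B * x.
Proof.
  intros Hf0 Hd HB x Hx.
  assert (HB0 : 0 <= B) by (pose proof (HB x Hx); pose proof (Rabs_pos (df x)); lra).
  assert (Hev : at_right 0 (fun t => f x - B * x <= f t <= f x + B * x)).
  { apply (at_right_of_interval 0 x); [lra|]. intros t Ht.
    assert (L : Rabs (f x - f t) <= B * (x - t))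
      by (apply (lipschitz_of_derive_bounded f df 0 d B Hd HB); lra).
    apply Rabs_le_between in L. nra. }
  pose proof (closed_filterlim_loc f _ 0 Hf0
    (filter_imp _ _ (fun t H => proj1 H) Hev) (closed_ge _)).
  pose proof (closed_filterlim_loc f _ 0 Hf0
    (filter_imp _ _ (fun t H => proj2 H) Hev) (closed_le _)).
  apply Rabs_le. lra.
Qed.

Section NonnegativePotential.

Variables (u du p : R -> R) (d : R).
Hypothesis Hdu : forall x, 0 < x < d -> is_derive u x (du x).
Hypothesis Hddu : forall x, 0 < x < d -> is_derive du x (p x * u x).
Hypothesis Hp : forall x, 0 < x < d -> 0 <= p x.
Hypothesis Hu0 : filterlim u (at_right 0) (locally 0).

Lemma u_du_nondecreasing :
  forall x y, 0 < x -> x <= y -> y < d -> u x * du x <= u y * du y.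
Proof.
  apply (nondecreasing_of_derive_nonneg _ (fun x => du x * du x + u x * (p x * u x))).
  - intros x Hx. apply is_derive_Rmult; [apply Hdu | apply Hddu]; exact Hx.
  - intros x Hx. specialize (Hp x Hx). nra.
Qed.

Lemma u_du_nonneg : forall x, 0 < x < d -> 0 <= u x * du x.
Proof.
  intros x Hx. destruct (Rle_or_lt 0 (u x * du x)) as [|Hneg]; [assumption | exfalso].
  (* On [(0, x)], [(u^2)' = 2 u du <= 2 (u du)(x) < 0], so [u^2] stays above
     [m = -(u du)(x) x > 0] near [0], contradicting [u(0+) = 0]. *)
  set (m := - (u x * du x) * x).
  assert (Hev : at_right 0 (fun t => m <= u t * u t)).
  { apply (at_right_of_interval 0 (x / 2)); [lra|]. intros t Ht.
    destruct (mean_value_interior (fun t => u t * u t)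
      (fun t => du t * u t + u t * du t) 0 d t x) as [c [Hc E]]; try lra.
    { intros z Hz. apply is_derive_Rmult; apply Hdu; exact Hz. }
    assert (u c * du c <= u x * du x) by (apply u_du_nondecreasing; lra).
    unfold m. nra. }
  pose proof (closed_filterlim_loc _ _ _ (filterlim_Rmult u u 0 0 Hu0 Hu0) Hev (closed_ge m)).
  unfold m in *. nra.
Qed.

Lemma abs_du_nondecreasing :
  forall x y, 0 < x -> x <= y -> y < d -> Rabs (du x) <= Rabs (du y).
Proof.
  intros x y Hx Hxy Hy. apply Rsqr_le_abs_0. unfold Rsqr.
  revert x y Hx Hxy Hy.
  apply (nondecreasing_of_derive_nonneg _ (fun x => p x * u x * du x + du x * (p x * u x))).
  - intros x Hx. apply is_derive_Rmult; apply Hddu; exact Hx.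
  - intros x Hx. pose proof (u_du_nonneg x Hx). pose proof (Hp x Hx). nra.
Qed.

End NonnegativePotential.

(* The quantity [P] of the header, coming from Rellich's multiplier [x u']. *)
Definition pohozaev (c lam : R) (u : R -> R) (x : R) : R :=
  x * Derive u x ^ 2 - u x * Derive u x - c * u x ^ 2 / x + lam * x * u x ^ 2.

Lemma abs_pohozaev_le (c lam B x : R) (u : R -> R) :
  0 <= c -> 0 < x <= 1 -> Rabs (Derive u x) <= B -> Rabs (u x) <= B * x ->
  Rabs (pohozaev c lam u x) <= (2 + c + Rabs lam) * B ^ 2 * x.
Proof.
  unfold pohozaev. set (a := u x). set (v := Derive u x). intros Hc Hx Hv Ha.
  assert (HB : 0 <= B) by (pose proof (Rabs_pos v); lra).
  assert (Hv2 : v ^ 2 <= B ^ 2)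
    by (rewrite <- (pow2_abs v); apply pow_incr; split; [apply Rabs_pos | exact Hv]).
  assert (Ha2 : a ^ 2 <= (B * x) ^ 2)
    by (rewrite <- (pow2_abs a); apply pow_incr; split; [apply Rabs_pos | exact Ha]).
  assert (Hav : Rabs (a * v) <= B ^ 2 * x).
  { rewrite Rabs_mult. pose proof (Rabs_pos a). pose proof (Rabs_pos v). nra. }
  assert (Hca : 0 <= c * a ^ 2 / x <= c * B ^ 2 * x).
  { split.
    - apply Rle_mult_inv_pos; [apply Rmult_le_pos; [lra | apply pow2_ge_0] | lra].
    - apply Rle_div_l; [lra|].
      apply Rle_trans with (c * (B * x) ^ 2); [apply Rmult_le_compat_l; lra | right; ring]. }
  assert (Hla : Rabs (lam * x * a ^ 2) <= Rabs lam * B ^ 2 * x).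
  { rewrite !Rabs_mult, (Rabs_pos_eq x), (Rabs_pos_eq (a ^ 2)) by (apply pow2_ge_0 || lra).
    assert (B ^ 2 * x ^ 2 <= B ^ 2 * 1) by (apply Rmult_le_compat_l; [apply pow2_ge_0 | nra]).
    assert (a ^ 2 <= B ^ 2) by nra.
    replace (Rabs lam * B ^ 2 * x) with (Rabs lam * x * B ^ 2) by ring.
    apply Rmult_le_compat_l; [apply Rmult_le_pos; [apply Rabs_pos | lra] | lra]. }
  apply Rabs_le_between in Hav. apply Rabs_le_between in Hla.
  assert (0 <= x * v ^ 2 <= B ^ 2 * x) by (pose proof (pow2_ge_0 v); split; nra).
  apply Rabs_le. nra.
Qed.


Lemma inv_sq_potential_nonneg_near_0 (c lam : R) :
  0 < c -> exists d, 0 < d /\ forall x, 0 < x < d -> 0 <= c / x ^ 2 - lam.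
Proof.
  intros Hc. pose proof (Rabs_pos lam).
  exists (sqrt (c / (Rabs lam + 1))). split.
  { apply sqrt_lt_R0, Rdiv_lt_0_compat; lra. }
  intros x Hx.
  assert (Hx2 : x ^ 2 * (Rabs lam + 1) < c).
  { apply Rlt_div_r; [lra|].
    rewrite <- (sqrt_sqrt (c / (Rabs lam + 1))) by (apply Rlt_le, Rdiv_lt_0_compat; lra).
    simpl. nra. }
  assert (Rabs lam + 1 <= c / x ^ 2) by (apply Rle_div_r; [apply pow_lt | ]; lra).
  pose proof (Rle_abs lam). lra.
Qed.

Lemma abs_inv_sq_potential_le (c lam b x : R) :
  0 <= c -> 0 < b -> b / 2 <= x -> Rabs (c / x ^ 2 - lam) <= 4 * c / b ^ 2 + Rabs lam.
Proof.
  intros Hc Hb Hx.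
  assert (0 <= c / x ^ 2 <= 4 * c / b ^ 2).
  { split; [apply Rle_mult_inv_pos; [lra | apply pow_lt; lra]|].
    apply Rle_div_l; [apply pow_lt; lra|].
    replace (4 * c / b ^ 2 * x ^ 2) with (c * (2 * x / b) ^ 2) by (field; lra).
    rewrite <- (Rmult_1_r c) at 1. apply Rmult_le_compat_l; [lra|].
    rewrite <- (pow1 2). apply pow_incr. split; [lra|]. apply Rle_div_r; lra. }
  eapply Rle_trans; [apply Rabs_triang|]. rewrite Rabs_Ropp, Rabs_pos_eq; lra.
Qed.

Section Eigenpair.

Variables (c b lam : R) (u : R -> R).
Hypothesis Hc : 0 <= c.
Hypothesis Hb : 0 < b.
Hypothesis Hu : dirichlet_eigenpair c b lam u.

Lemma is_derive_u x : 0 < x < b -> is_derive u x (Derive u x).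
Proof. intros Hx. apply Derive_correct. now apply Hu. Qed.

Lemma is_derive_Derive_u x : 0 < x < b ->
  is_derive (Derive u) x ((c / x ^ 2 - lam) * u x).
Proof.
  intros Hx. destruct Hu as (Hd & Heq & _).
  replace ((c / x ^ 2 - lam) * u x) with (Derive_n u 2 x)
    by (specialize (Heq x Hx); unfold q_inv_sq in Heq; lra).
  apply Derive_correct. now apply Hd.
Qed.

Lemma is_derive_u_b : is_derive u b (Derive u b).
Proof. apply Derive_correct. now destruct Hu as (_ & _ & H & _). Qed.

Lemma u_at_right_0 : filterlim u (at_right 0) (locally 0).
Proof. now destruct Hu as (_ & _ & _ & H & _). Qed.

Lemma u_b : u b = 0.
Proof. now destruct Hu as (_ & _ & _ & _ & _ & H & _). Qed.

Lemma continuous_u x : 0 < x <= b -> continuous u x.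
Proof.
  intros Hx. apply (ex_derive_continuous u).
  destruct (Req_dec x b) as [->|Hxb]; eexists; [apply is_derive_u_b | apply is_derive_u; lra].
Qed.

Lemma u_at_left_b : filterlim u (at_left b) (locally 0).
Proof.
  rewrite <- u_b. apply (filterlim_filter_le_1 _ (filter_le_within _)).
  apply continuous_u. lra.
Qed.

Lemma Derive_u_at_left_b : filterlim (Derive u) (at_left b) (locally (Derive u b)).
Proof.
  destruct (proj1 (filterlim_locally (F := locally b) u (u b)) (continuous_u b ltac:(lra))
    (mkposreal 1 Rlt_0_1)) as [delta Hdelta].
  pose proof (cond_pos delta).
  set (a := b - Rmin delta (b / 2)).
  assert (Ha : b / 2 <= a < b)
    by (unfold a; pose proof (Rmin_r delta (b / 2)); pose proof (Rmin_pos delta (b / 2)); lra).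
  apply (filterlim_derive_at_left u (Derive u) a b (Derive u b) (4 * c / b ^ 2 + Rabs lam));
    [lra | intros; apply is_derive_u; lra | | exact is_derive_u_b].
  apply (lipschitz_of_derive_bounded _ (fun x => (c / x ^ 2 - lam) * u x));
    [intros; apply is_derive_Derive_u; lra|].
  intros x Hx.
  assert (Hux : Rabs (u x) <= 1).
  { assert (Hball : ball b delta x).
    { change (Rabs (x - b) < delta). apply Rabs_def1;
        unfold a in Hx; pose proof (Rmin_l delta (b / 2)); lra. }
    specialize (Hdelta x Hball). change (Rabs (u x - u b) < 1) in Hdelta.
    rewrite u_b, Rminus_0_r in Hdelta. lra. }
  pose proof (abs_inv_sq_potential_le c lam b x Hc Hb ltac:(lra)) as Hpot.
  rewrite Rabs_mult. rewrite <- (Rmult_1_r (4 * c / b ^ 2 + Rabs lam)).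
  apply Rmult_le_compat; try apply Rabs_pos; assumption.
Qed.

Lemma Derive_u_bounded_near_0_c_pos : 0 < c ->
  exists d B, 0 < d /\ forall x, 0 < x < d -> Rabs (Derive u x) <= B.
Proof.
  intros Hc0. destruct (inv_sq_potential_nonneg_near_0 c lam Hc0) as [d0 [Hd0 Hpot]].
  set (d := Rmin d0 b).
  assert (Hd : 0 < d <= d0 /\ d <= b)
    by (unfold d; pose proof (Rmin_l d0 b); pose proof (Rmin_r d0 b);
        pose proof (Rmin_pos d0 b Hd0 Hb); lra).
  exists (d / 2), (Rabs (Derive u (d / 2))). split; [lra|]. intros x Hx.
  apply (abs_du_nondecreasing u (Derive u) (fun x => c / x ^ 2 - lam) d);
    [intros; apply is_derive_u | intros; apply is_derive_Derive_u
    | intros; apply Hpot | exact u_at_right_0 | ..]; lra.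
Qed.

Lemma Derive_u_bounded_near_0_c_0 : c = 0 ->
  exists d B, 0 < d /\ forall x, 0 < x < d -> Rabs (Derive u x) <= B.
Proof.
  intros Hc0.
  destruct (proj1 (filterlim_locally u 0) u_at_right_0 (mkposreal 1 Rlt_0_1))
    as [delta Hdelta].
  pose proof (cond_pos delta).
  set (d := Rmin delta b).
  assert (Hd : 0 < d <= delta /\ d <= b)
    by (unfold d; pose proof (Rmin_l delta b); pose proof (Rmin_r delta b);
        pose proof (Rmin_pos delta b); lra).
  assert (Hddu : forall y, 0 < y < d -> Rabs ((c / y ^ 2 - lam) * u y) <= Rabs lam).
  { intros y Hy.
    assert (Hball : ball 0 delta y) by (change (Rabs (y - 0) < delta); apply Rabs_def1; lra).
    specialize (Hdelta y Hball (proj1 Hy)). change (Rabs (u y - 0) < 1) in Hdelta.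
    rewrite Hc0. unfold Rdiv.
    rewrite Rmult_0_l, Rminus_0_l, Rabs_mult, Rabs_Ropp, Rminus_0_r in *.
    pose proof (Rabs_pos lam). pose proof (Rabs_pos (u y)). nra. }
  exists (d / 2), (Rabs (Derive u (d / 2)) + Rabs lam * d). split; [lra|]. intros x Hx.
  assert (L : Rabs (Derive u (d / 2) - Derive u x) <= Rabs lam * (d / 2 - x)).
  { apply (lipschitz_of_derive_bounded _ (fun y => (c / y ^ 2 - lam) * u y) 0 d);
      [intros; apply is_derive_Derive_u; lra | exact Hddu | lra ..]. }
  pose proof (Rabs_triang_inv (Derive u x) (Derive u (d / 2))) as T.
  rewrite Rabs_minus_sym in T. pose proof (Rabs_pos lam).
  assert (Rabs lam * (d / 2 - x) <= Rabs lam * d) by (apply Rmult_le_compat_l; lra).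
  lra.
Qed.

Lemma Derive_u_bounded_near_0 :
  exists d B, 0 < d /\ forall x, 0 < x < d -> Rabs (Derive u x) <= B.
Proof.
  destruct (Rle_lt_or_eq_dec 0 c Hc) as [Hc0 | Hc0];
    [apply Derive_u_bounded_near_0_c_pos | apply Derive_u_bounded_near_0_c_0]; auto.
Qed.

Lemma pohozaev_at_right_0 : filterlim (pohozaev c lam u) (at_right 0) (locally 0).
Proof.
  destruct Derive_u_bounded_near_0 as (d & B & Hd & HB).
  pose proof (abs_le_linear_of_derive_bounded u (Derive u) (Rmin d b) B u_at_right_0) as Hlin.
  set (K := (2 + c + Rabs lam) * B ^ 2).
  assert (Hlim : forall k, filterlim (fun x => k * x) (at_right 0) (locally 0)).
  { intros k.
    enough (H : filterlim (fun x => k * x) (at_right 0) (locally (k * 0)))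
      by (rewrite Rmult_0_r in H; exact H).
    apply (filterlim_filter_le_1 _ (filter_le_within _)).
    apply (ex_derive_continuous (fun x => k * x)). auto_derive. exact I. }
  apply (filterlim_le_le (fun x => (- K) * x) _ (fun x => K * x) 0); [| apply Hlim ..].
  apply (at_right_of_interval 0 (Rmin (Rmin d b) 1)); [repeat apply Rmin_pos; lra|].
  intros x Hx. pose proof (Rmin_l (Rmin d b) 1). pose proof (Rmin_r (Rmin d b) 1).
  pose proof (Rmin_l d b). pose proof (Rmin_r d b).
  assert (Hbound : Rabs (pohozaev c lam u x) <= K * x).
  { apply abs_pohozaev_le; [exact Hc | lra | apply HB; lra |].
    apply Hlin; [intros; apply is_derive_u | intros; apply HB | ]; lra. }
  apply Rabs_le_between in Hbound. lra.
Qed.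

Lemma pohozaev_at_left_b :
  filterlim (pohozaev c lam u) (at_left b) (locally (b * Derive u b ^ 2)).
Proof.
  assert (Hid : filterlim (fun x => x) (at_left b) (locally b))
    by exact (filterlim_filter_le_1 _ (filter_le_within _) (filterlim_id _ (locally b))).
  assert (Hinv : filterlim Rinv (at_left b) (locally (/ b))).
  { apply (filterlim_filter_le_1 _ (filter_le_within _)).
    apply (ex_derive_continuous Rinv). auto_derive. lra. }
  pose proof u_at_left_b as U. pose proof Derive_u_at_left_b as D.
  apply (filterlim_ext (fun x => x * (Derive u x * Derive u x)
    + u x * ((-1) * Derive u x + (- c) * u x * / x + lam * x * u x))).
  { intros x. unfold pohozaev, Rdiv. ring. }
  replace (b * Derive u b ^ 2) with (b * (Derive u b * Derive u b)
    + 0 * ((-1) * Derive u b + (- c) * 0 * / b + lam * b * 0)) by ring.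
  apply filterlim_Rplus.
  - exact (filterlim_Rmult _ _ _ _ Hid (filterlim_Rmult _ _ _ _ D D)).
  - apply (filterlim_Rmult _ _ _ _ U). apply filterlim_Rplus; [apply filterlim_Rplus|].
    + exact (filterlim_Rmult _ _ _ _ (filterlim_const (-1)) D).
    + exact (filterlim_Rmult _ _ _ _ (filterlim_Rmult _ _ _ _ (filterlim_const (- c)) U) Hinv).
    + exact (filterlim_Rmult _ _ _ _ (filterlim_Rmult _ _ _ _ (filterlim_const lam) Hid) U).
Qed.

Lemma is_derive_pohozaev x : 0 < x < b ->
  is_derive (pohozaev c lam u) x (2 * lam * u x ^ 2).
Proof.
  intros Hx.
  assert (E : Derive (Derive u) x = (c / x ^ 2 - lam) * u x)
    by (apply is_derive_unique, is_derive_Derive_u, Hx).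
  assert (X1 : ex_derive u x) by (eexists; apply is_derive_u, Hx).
  assert (X2 : ex_derive (Derive u) x) by (eexists; apply is_derive_Derive_u, Hx).
  unfold pohozaev. auto_derive.
  - repeat split; auto. lra.
  - change (Derive (fun y => Derive u y) x) with (Derive (Derive u) x).
    change (Derive (fun y => u y) x) with (Derive u x).
    rewrite E. field. lra.
Qed.

Lemma u_sq_continuous_extension :
  exists g : R -> R, (forall x, continuous g x) /\ forall x, 0 < x < b -> g x = u x ^ 2.
Proof.
  assert (Hsq : forall l, continuous (fun z : R => z ^ 2) l).
  { intros l. apply (ex_derive_continuous (fun z => z ^ 2)). auto_derive. exact I. }
  destruct (C0_extension_lt (fun x => u x ^ 2) (0 ^ 2) (0 ^ 2) 0 b Hb) as (g & Hg & Hgu & _).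
  - intros x Hx.
    exact (filterlim_comp _ _ _ u (fun z => z ^ 2) _ _ _ (continuous_u x ltac:(lra)) (Hsq _)).
  - exact (filterlim_comp _ _ _ u (fun z => z ^ 2) _ _ _ u_at_right_0 (Hsq 0)).
  - exact (filterlim_comp _ _ _ u (fun z => z ^ 2) _ _ _ u_at_left_b (Hsq 0)).
  - exists g. split; [exact Hg | exact Hgu].
Qed.

Lemma rellich_identity : b * Derive u b ^ 2 = 2 * lam.
Proof.
  (* [RInt (fun x => u x ^ 2) 0 b] is only meaningful once [u^2] is known to be integrable;
     a continuous extension [g] of [u^2] from [(0,b)] is, and has the same integral. *)
  destruct u_sq_continuous_extension as (g & Hg & Hgu).
  set (I := fun x => RInt g 0 x).
  pose proof (is_derive_RInt_continuous g 0 Hg) as HI.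
  assert (HIc : forall x, continuous I x)
    by (intros x; apply (ex_derive_continuous I); eexists; apply HI).
  set (G := fun x => pohozaev c lam u x + - (2 * lam) * I x).
  assert (HG : forall x, 0 < x < b -> is_derive G x 0).
  { intros x Hx.
    pose proof (is_derive_plus _ _ x _ _ (is_derive_pohozaev x Hx)
      (is_derive_scal _ x (- (2 * lam)) _ (HI x))) as H.
    change (is_derive G x (2 * lam * u x ^ 2 + - (2 * lam) * g x)) in H.
    rewrite Hgu in H by exact Hx.
    replace (2 * lam * u x ^ 2 + - (2 * lam) * u x ^ 2) with 0 in H by ring. exact H. }
  assert (L0 : filterlim G (at_right 0) (locally (0 + - (2 * lam) * I 0))).
  { apply filterlim_Rplus; [apply pohozaev_at_right_0|].
    apply filterlim_Rmult; [apply filterlim_const|].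
    apply (filterlim_filter_le_1 _ (filter_le_within _)); apply HIc. }
  assert (Lb : filterlim G (at_left b) (locally (b * Derive u b ^ 2 + - (2 * lam) * I b))).
  { apply filterlim_Rplus; [apply pohozaev_at_left_b|].
    apply filterlim_Rmult; [apply filterlim_const|].
    apply (filterlim_filter_le_1 _ (filter_le_within _)); apply HIc. }
  assert (I0 : I 0 = 0) by exact (RInt_point 0 g).
  assert (Ib : I b = 1).
  { destruct Hu as (_ & _ & _ & _ & _ & _ & Hnorm). rewrite <- Hnorm. symmetry.
    apply RInt_ext. rewrite Rmin_left, Rmax_right by lra. intros x Hx. symmetry. apply Hgu, Hx. }
  pose proof (derive_0_eq_at_right_limit G 0 b _ HG L0 (b / 2) ltac:(lra)) as E0.
  pose proof (derive_0_eq_at_left_limit G 0 b _ HG Lb (b / 2) ltac:(lra)) as Eb.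
  rewrite I0 in E0. rewrite Ib in Eb. lra.
Qed.

Lemma eigenvalue_neq_0 : lam <> 0.
Proof.
  intros Hlam.
  assert (Hpot : forall x, 0 < x < b -> 0 <= c / x ^ 2 - lam).
  { intros x Hx. rewrite Hlam, Rminus_0_r. apply Rle_mult_inv_pos; [lra | apply pow_lt; lra]. }
  assert (Hw : forall x, 0 < x < b -> u x * Derive u x = 0).
  { intros x Hx. apply Rle_antisym.
    - rewrite <- (Rmult_0_l (Derive u b)).
      apply (closed_filterlim_loc (FF := Proper_StrongProper _ (at_left_proper_filter b))
        (fun y => u y * Derive u y) (fun z => u x * Derive u x <= z)
        (0 * Derive u b)); [| | apply closed_ge].
      + exact (filterlim_Rmult _ _ _ _ u_at_left_b Derive_u_at_left_b).
      + apply (at_left_of_interval b (b - x)); [lra|]. intros y Hy.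
        apply (u_du_nondecreasing u (Derive u) _ b is_derive_u is_derive_Derive_u Hpot); lra.
    - exact (u_du_nonneg u (Derive u) _ b is_derive_u is_derive_Derive_u Hpot u_at_right_0 x Hx). }
  assert (Hu2 : forall x, 0 < x < b -> u x * u x = 0 * 0).
  { apply derive_0_eq_at_right_limit;
      [| exact (filterlim_Rmult _ _ _ _ u_at_right_0 u_at_right_0)].
    intros x Hx. replace 0 with (Derive u x * u x + u x * Derive u x)
      by (rewrite (Rmult_comm (Derive u x)), Hw by exact Hx; ring).
    apply is_derive_Rmult; apply is_derive_u, Hx. }
  destruct Hu as (_ & _ & _ & _ & _ & _ & Hnorm).
  rewrite (RInt_ext _ (fun _ => 0)), RInt_const in Hnorm.
  - change ((b - 0) * 0 = 1) in Hnorm. lra.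
  - rewrite Rmin_left, Rmax_right by lra. intros x Hx.
    replace (u x ^ 2) with (u x * u x) by ring. rewrite Hu2 by exact Hx. apply Rmult_0_l.
Qed.

End Eigenpair.

Theorem mainTheorem4 (c b lam : R) (u : R -> R) :
  0 <= c -> 0 < b ->
  dirichlet_eigenpair c b lam u ->
  J_functional lam u b = 2 / b.
Proof.
  intros Hc Hb Hu.
  pose proof (rellich_identity c b lam u Hc Hb Hu) as E.
  pose proof (eigenvalue_neq_0 c b lam u Hc Hb Hu) as Hlam.
  unfold J_functional.
  replace (Derive u b ^ 2) with (2 * lam / b) by (rewrite <- E; field; lra).
  field. split; [lra | exact Hlam].
Qed.
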